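(* Let $n\ge1$, $a\in\mathcal{IS}_n$, and consider the semigroup $(\mathcal{IS}_n,*_a)$. Let $x\in\mathcal{IS}_n$. If $\operatorname{ran}(x)\subseteq\operatorname{dom}(a)$, then the $\mathcal{R}$-class of $x$ is $$R_x=\{y\in\mathcal{IS}_n : \operatorname{dom}(y)=\operatorname{dom}(x),\ \operatorname{ran}(y)\subseteq\operatorname{dom}(a)\};$$ otherwise $R_x=\{x\}$.
   Context: $\mathcal{IS}_n$ is the set of all partial injective maps of $N=\{1,\dots,n\}$, including the empty map; $\operatorname{dom}(x)$, $\operatorname{ran}(x)$ denote domain and range. Maps are composed from left to right: $(xy)(i)=y(x(i))$, defined exactly when $i\in\operatorname{dom}(x)$ and $x(i)\in\operatorname{dom}(y)$. For fixed $a\in\mathcal{IS}_n$, $x*_a y:=xay$. Green's relations in a semigroup $S$: with $S^1$ the semigroup $S$ with an identity adjoined, $x\mathcal{L}y$ iff $S^1x=S^1y$, $x\mathcal{R}y$ iff $xS^1=yS^1$, $\mathcal{H}=\mathcal{L}\cap\mathcal{R}$, $\mathcal{D}=\mathcal{L}\circ\mathcal{R}$ (which equals $\mathcal{R}\circ\mathcal{L}$). $L_x,R_x,H_x,D_x$ denote the corresponding classes of $x$, here computed in $(\mathcal{IS}_n,*_a)$. *)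

From mathcomp Require Import all_boot.
Set Implicit Arguments. Unset Strict Implicit. Unset Printing Implicit Defensive.

(* A partial map (type PIM) of N = {1..n}, modelled on 'I_n (= {0..n-1}): None = undefined. *)
Definition PIM (n : nat) := {ffun 'I_n -> option 'I_n}.

Definition pinj n (x : PIM n) : bool :=
  [forall i, forall j, (x i != None) ==> (x i == x j) ==> (i == j)].

Definition ISn n : {set PIM n} := [set x | pinj x].

Definition dom n (x : PIM n) : {set 'I_n} := [set i | x i != None].
Definition ran n (x : PIM n) : {set 'I_n} := [set j | [exists i, x i == Some j]].

(* left-to-right composition: (x y)(i) = y (x i) *)
Definition comp n (x y : PIM n) : PIM n :=
  [ffun i => if x i is Some j then y j else None].

Definition sand n (a x y : PIM n) : PIM n := comp (comp x a) y.

(* principal right ideal x S^1 in (IS_n, *_a) *)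
Definition rideal n (a x : PIM n) : {set PIM n} :=
  x |: [set sand a x s | s in ISn n].

Definition Rclass n (a x : PIM n) : {set PIM n} :=
  [set y in ISn n | rideal a y == rideal a x].

From Pilot Require (* Re-import so that [comp] denotes partial composition, not ssrfun's [comp]. *)
Import Defs.
From mathcomp Require Import all_boot.
Import Defs.

Set Implicit Arguments.
Unset Strict Implicit.
Unset Printing Implicit Defensive.

(* In (IS_n, *_a) every element of the right ideal generated by x is either x
   itself or of the form x a s, whose domain lies inside dom (x a).  When
   ran x is inside dom a, the map x a is injective with domain dom x, so every
   partial injection z with dom z inside dom x factors as x a s; the right ideal
   of x is then all of {z | dom z <= dom x}, and R-classes are determined by
   the domain.  When ran x is not inside dom a, dom (x a) is strictly smaller
   than dom x, so x cannot be reached from any other y, and R_x = {x}. *)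

Lemma pinjP n (x : PIM n) :
  reflect (forall i j, x i != None -> x i = x j -> i = j) (pinj x).
Proof.
apply: (iffP forallP) => [H i j Hi Hij | H i].
  by have /forallP/(_ j)/implyP/(_ Hi)/implyP := H i; move/(_ (introT eqP Hij))/eqP.
apply/forallP => j; apply/implyP => Hi; apply/implyP => /eqP Hij; apply/eqP; exact: H.
Qed.

Lemma pinj_comp n (x y : PIM n) : pinj x -> pinj y -> pinj (comp x y).
Proof.
move=> /pinjP Hx /pinjP Hy; apply/pinjP => i j; rewrite !ffunE.
case Ei: (x i) => [k|] //; case Ej: (x j) => [k'|]; last by move=> H E; rewrite E in H.
by move=> Hk /(Hy _ _ Hk) kk; apply: Hx; rewrite ?Ei ?Ej ?kk.
Qed.

Lemma dom_comp_sub n (x y : PIM n) : dom (comp x y) \subset dom x.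
Proof. by apply/subsetP => i; rewrite !inE ffunE; case: (x i). Qed.

Lemma dom_comp_eq n (x y : PIM n) : (dom (comp x y) == dom x) = (ran x \subset dom y).
Proof.
apply/eqP/subsetP => [E j | H].
  rewrite inE => /existsP[i /eqP xi].
  have : i \in dom (comp x y) by rewrite E inE xi.
  by rewrite !inE ffunE xi.
apply/setP => i; rewrite !inE ffunE; case E: (x i) => [j|] //=.
have /H : j \in ran x by rewrite inE; apply/existsP; exists i; rewrite E.
by rewrite inE.
Qed.

(* The factor is z composed with the partial inverse of f. *)
Lemma pinj_factor n (f z : PIM n) :
  pinj f -> pinj z -> dom z \subset dom f -> exists2 s, pinj s & comp f s = z.
Proof.
move=> /pinjP Hf /pinjP Hz Hd.
pose s : PIM n := [ffun j => if [pick i | f i == Some j] is Some i then z i else None].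
exists s.
  apply/pinjP => j j'; rewrite !ffunE.
  case: pickP => [i /eqP fi|] //.
  case: pickP => [i' /eqP fi' zi /(Hz _ _ zi) ii' | _ zi zi']; last by rewrite zi' in zi.
  by move: fi; rewrite ii' fi' => -[].
apply/ffunP => i; rewrite ffunE.
case fi: (f i) => [j|].
  rewrite ffunE; case: pickP => [i' /eqP fi'|]; last by move/(_ i); rewrite fi eqxx.
  by rewrite (Hf i' i) ?fi' ?fi.
have : i \notin dom z by apply/negP => /(subsetP Hd); rewrite inE fi.
by rewrite inE negbK => /eqP.
Qed.

Lemma rideal_mem_dom n (a y z : PIM n) :
  z \in rideal a y -> z = y \/ dom z \subset dom (comp y a).
Proof.
rewrite in_setU1 => /orP[/eqP->|/imsetP[s _ ->]]; [by left | right; exact: dom_comp_sub].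
Qed.

Lemma dom_rideal_sub n (a y z : PIM n) : z \in rideal a y -> dom z \subset dom y.
Proof. by case/rideal_mem_dom => [-> | /subset_trans]; [exact: subxx | apply; exact: dom_comp_sub]. Qed.

Lemma rideal_dom n (a x : PIM n) : pinj a -> pinj x -> ran x \subset dom a ->
  rideal a x = [set z in ISn n | dom z \subset dom x].
Proof.
move=> Ha Hx Hr; apply/setP => z; rewrite in_setU1 !inE; apply/idP/idP.
  case/orP => [/eqP-> | /imsetP[s]]; first by rewrite Hx subxx.
  rewrite inE => Hs ->; rewrite /sand !pinj_comp //=.
  by apply: subset_trans (dom_comp_sub _ _) _; exact: dom_comp_sub.
case/andP => Hz Hd; apply/orP; right.
have Hxa : dom (comp x a) = dom x by apply/eqP; rewrite dom_comp_eq.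
have Hzxa : dom z \subset dom (comp x a) by rewrite Hxa.
have [s Hs <-] := pinj_factor (pinj_comp Hx Ha) Hz Hzxa.
by apply/imsetP; exists s; rewrite ?inE.
Qed.

Lemma rideal_eq_dom n (a x y : PIM n) : rideal a y = rideal a x -> dom y = dom x.
Proof.
move=> E; have yx : y \in rideal a x by rewrite -E setU11.
have xy : x \in rideal a y by rewrite E setU11.
by apply/eqP; rewrite eqEsubset (dom_rideal_sub yx) (dom_rideal_sub xy).
Qed.

(* If x lies in the right ideal of y != x, then dom x is inside dom (y a),
   which is inside dom y = dom x; hence dom (y a) = dom y. *)
Lemma rideal_eq_ran n (a x y : PIM n) :
  rideal a y = rideal a x -> x != y -> ran y \subset dom a.
Proof.
move=> E ne; have : x \in rideal a y by rewrite E setU11.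
case/rideal_mem_dom => [xy | Hs]; first by rewrite xy eqxx in ne.
by rewrite -dom_comp_eq eqEsubset dom_comp_sub (rideal_eq_dom E).
Qed.

Theorem theorem4 (n : nat) (a x : PIM n) :
  0 < n -> a \in ISn n -> x \in ISn n ->
  (ran x \subset dom a ->
     Rclass a x = [set y in ISn n | (dom y == dom x) && (ran y \subset dom a)]) /\
  (~~ (ran x \subset dom a) -> Rclass a x = [set x]).
Proof.
move=> _; rewrite !inE => Ha Hx; split => [Hr | Hn]; apply/setP => y; rewrite !inE.
  apply/andP/andP => [[Hy /eqP E] | [Hy /andP[/eqP Hd Hry]]].
    split=> //; rewrite (rideal_eq_dom E) eqxx /=.
    by case: (eqVneq x y) => [<- // | ne]; exact: rideal_eq_ran E ne.
  by split=> //; rewrite (rideal_dom Ha Hy Hry) (rideal_dom Ha Hx Hr) Hd.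
apply/andP/eqP => [[Hy /eqP E] | ->]; last by rewrite Hx eqxx.
by apply/eqP; apply: contraNT Hn; exact: rideal_eq_ran (esym E).
Qed.
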